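(* Let $f(a)=\alpha_d a^d+\dots+\alpha_1 a+\alpha_0$ be a real polynomial of degree $d\ge 1$ (so $\alpha_d\neq 0$), and let $S$ be the set of real roots of $f$ lying in the open interval $(0,1)$. Then there is a $3$-person game in which the first player has two pure strategies and the second and third players each have $\lceil d/2\rceil+1$ pure strategies, such that, letting $E$ denote the set of totally mixed Nash equilibria of this game, the projection of $E$ onto the probability that the first player plays her first pure strategy equals $S$, and $\#E=\#S$.
   Context: A finite normal form game consists of players $I=\{1,\dots,N\}$, finite pure strategy sets $S_i=\{s_{i0},\dots,s_{id_i}\}$, and payoffs $u_i:\prod_i S_i\to\mathbb{R}$. A mixed strategy of player $i$ is a probability vector $\sigma_i$ on $S_i$; expected payoffs are multilinear: $u_i(\sigma)=\sum_{s}u_i(s)\prod_k\sigma_k(s_k)$, and $u_i(s_{ij},\sigma_{-i})$ denotes player $i$'s expected payoff when $i$ plays $s_{ij}$ and the others play according to $\sigma$. A profile $\sigma$ is a totally mixed Nash equilibrium if $0<\sigma_i(s_{ij})<1$ for all $i,j$ and $u_i(s_{ij},\sigma_{-i})=u_i(s_{i0},\sigma_{-i})$ for all $i$ and $j=1,\dots,d_i$. *)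

From HB Require Import structures.
From mathcomp Require Import all_boot all_order all_algebra.
From mathcomp Require Import reals.
Set Implicit Arguments. Unset Strict Implicit. Unset Printing Implicit Defensive.
Import Order.TTheory GRing.Theory Num.Theory.
Local Open Scope ring_scope.

Section Game3.
Variables (R : numDomainType) (n1 n2 n3 : nat).

Definition payoff3 := 'I_n1 -> 'I_n2 -> 'I_n3 -> R.

Definition profile3 := ({ffun 'I_n1 -> R} * {ffun 'I_n2 -> R} * {ffun 'I_n3 -> R})%type.

Definition is_mixed (n : nat) (s : {ffun 'I_n -> R}) : Prop :=
  (forall j, 0 <= s j) /\ \sum_(j < n) s j = 1.

Definition pure (n : nat) (j : 'I_n) : {ffun 'I_n -> R} := [ffun x => (x == j)%:R].

Definition exp_payoff (u : payoff3) (s1 : {ffun 'I_n1 -> R})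
  (s2 : {ffun 'I_n2 -> R}) (s3 : {ffun 'I_n3 -> R}) : R :=
  \sum_(a < n1) \sum_(b < n2) \sum_(c < n3) u a b c * s1 a * s2 b * s3 c.

Definition totally_mixed (n : nat) (s : {ffun 'I_n -> R}) : Prop :=
  forall j, 0 < s j < 1.

Definition totally_mixed_NE (u1 u2 u3 : payoff3) (sg : profile3) : Prop :=
  let: (s1, s2, s3) := sg in
  [/\ is_mixed s1, is_mixed s2, is_mixed s3,
      totally_mixed s1 /\ totally_mixed s2 /\ totally_mixed s3 &
      [/\ forall (j0 j : 'I_n1), (j0 : nat) = 0%N ->
            exp_payoff u1 (pure j) s2 s3 = exp_payoff u1 (pure j0) s2 s3,
          forall (j0 j : 'I_n2), (j0 : nat) = 0%N ->
            exp_payoff u2 s1 (pure j) s3 = exp_payoff u2 s1 (pure j0) s3 &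
          forall (j0 j : 'I_n3), (j0 : nat) = 0%N ->
            exp_payoff u3 s1 s2 (pure j) = exp_payoff u3 s1 s2 (pure j0)]].
End Game3.

Definition has_card (T : eqType) (P : T -> Prop) (n : nat) : Prop :=
  exists s : seq T, [/\ uniq s, forall x, P x <-> x \in s & size s = n].

From mathcomp Require Import all_boot all_order all_algebra.
From mathcomp Require Import reals polyrcf.
From mathcomp Require Import ring lra zify.
Set Implicit Arguments.
Unset Strict Implicit.
Unset Printing Implicit Defensive.
Import Order.TTheory GRing.Theory Num.Theory.
Local Open Scope ring_scope.

(* Player 1 mixes (x, 1 - x); players 2 and 3 choose among 0, ..., k with
   k = ceil(d/2).  Player 2 is paid so that her strategy j >= 1 earns
   s3(j) - x s3(j - 1) against player 3's mix s3, and strategy 0 earns 0;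
   indifference thus forces s3 to be the truncated geometric law
   x^j / (1 + x + ... + x^k), and symmetrically for s2.  Player 1 earns 0
   with her first strategy and sum g(b, c) s2(b) s3(c) with her second, where
   the coefficients of f are laid out along the antidiagonals b + c = i of the
   grid (possible as 2k >= d); against geometric mixes this is
   f(x) / (1 + ... + x^k)^2.  So totally mixed equilibria correspond exactly,
   and injectively, to the roots of f in (0, 1). *)

Lemma sum_indicator_mul (R : pzSemiRingType) n (i : 'I_n) (F : 'I_n -> R) :
  \sum_(c < n) (c == i)%:R * F c = F i.
Proof.
rewrite (bigD1 i) //= eqxx mul1r big1 ?addr0 // => c /negbTE ->.
by rewrite mul0r.
Qed.

Lemma big_ord2 (R : nmodType) (F : 'I_2 -> R) :
  \sum_(a < 2) F a = F ord0 + F ord_max.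
Proof.
by rewrite !big_ord_recl big_ord0 addr0; congr (_ + F _); exact: val_inj.
Qed.

Lemma ord2P (a : 'I_2) : a = ord0 \/ a = ord_max.
Proof.
by case: a => [[|[|a]]] a_lt; [left|right|]; rewrite //; exact: val_inj.
Qed.

Section ExpPayoff.
Variables (R : numDomainType) (n1 n2 n3 : nat) (u : payoff3 R n1 n2 n3).

Lemma exp_payoff_pure1 j s2 s3 :
  exp_payoff u (pure R j) s2 s3 = \sum_b \sum_c u j b c * s2 b * s3 c.
Proof.
rewrite /exp_payoff (bigD1 j) //= [X in _ + X]big1 ?addr0; last first.
  move=> a /negbTE Ha; apply: big1 => b _; apply: big1 => c _.
  by rewrite /pure ffunE Ha mulr0 !mul0r.
by apply: eq_bigr => b _; apply: eq_bigr => c _; rewrite /pure ffunE eqxx mulr1.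
Qed.

Lemma exp_payoff_pure2 s1 j s3 :
  exp_payoff u s1 (pure R j) s3 = \sum_a \sum_c u a j c * s1 a * s3 c.
Proof.
rewrite /exp_payoff; apply: eq_bigr => a _.
rewrite (bigD1 j) //= [X in _ + X]big1 ?addr0; last first.
  move=> b /negbTE Hb; apply: big1 => c _.
  by rewrite /pure ffunE Hb mulr0 !mul0r.
by apply: eq_bigr => c _; rewrite /pure ffunE eqxx mulr1.
Qed.

Definition swap23 : payoff3 R n1 n3 n2 := fun a c b => u a b c.

Lemma exp_payoff_swap23 s1 s2 s3 :
  exp_payoff swap23 s1 s3 s2 = exp_payoff u s1 s2 s3.
Proof.
rewrite /exp_payoff; apply: eq_bigr => a _; rewrite exchange_big.
by apply: eq_bigr => b _; apply: eq_bigr => c _; rewrite /swap23 mulrAC.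
Qed.

End ExpPayoff.

Section Bernoulli.
Variable R : numDomainType.

Definition bernoulli_mixed (x : R) : {ffun 'I_2 -> R} :=
  [ffun a => if a == ord0 then x else 1 - x].

Lemma bernoulli_mixed_sum x : \sum_(a < 2) bernoulli_mixed x a = 1.
Proof. by rewrite big_ord2 !ffunE /=; ring. Qed.

Lemma totally_mixed_bernoulli x :
  0 < x < 1 -> totally_mixed (bernoulli_mixed x).
Proof.
case/andP=> x_gt0 x_lt1 a; rewrite ffunE.
by case: ifP => _; rewrite ?subr_gt0 ?gtrBl x_gt0 x_lt1.
Qed.

Lemma is_mixed_bernoulli x : 0 < x < 1 -> is_mixed (bernoulli_mixed x).
Proof.
move=> x01; split; last exact: bernoulli_mixed_sum.
by move=> a; have /andP[/ltW] := totally_mixed_bernoulli x01 a.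
Qed.

Lemma bernoulli_mixedE (s : {ffun 'I_2 -> R}) :
  \sum_(a < 2) s a = 1 -> s = bernoulli_mixed (s ord0).
Proof.
rewrite big_ord2 => s1; apply/ffunP => a; rewrite ffunE.
by case: (ord2P a) => -> //=; rewrite -s1; ring.
Qed.

End Bernoulli.

Section Geometric.
Variables (R : realFieldType) (k : nat).

Definition geom_norm (x : R) := \sum_(c < k.+1) x ^+ c.

Definition geom_mixed (x : R) : {ffun 'I_k.+1 -> R} :=
  [ffun c : 'I_k.+1 => x ^+ c / geom_norm x].

Lemma geom_norm_gt0 x : 0 <= x -> 0 < geom_norm x.
Proof.
move=> x_ge0; rewrite /geom_norm big_ord_recl expr0.
have : 0 <= \sum_(i < k) x ^+ (lift ord0 i).
  by apply: sumr_ge0 => i _; exact: exprn_ge0.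
lra.
Qed.

Lemma geom_mixed_succ x (j : 'I_k.+1) : j != ord0 ->
  geom_mixed x j = x * geom_mixed x (inord j.-1).
Proof.
move=> j_neq0; rewrite !ffunE inordK; last exact: leq_ltn_trans (leq_pred _) _.
have : (0 < j)%N by rewrite lt0n.
by case: (nat_of_ord j) => [//|n] _; rewrite exprS mulrA.
Qed.

Lemma is_mixed_geom x : 0 <= x -> is_mixed (geom_mixed x).
Proof.
move=> x_ge0; have Z_gt0 := geom_norm_gt0 x_ge0; rewrite /is_mixed; split.
  by move=> j; rewrite ffunE divr_ge0 ?exprn_ge0 // ltW.
under eq_bigr do rewrite ffunE.
by rewrite -mulr_suml divff // gt_eqF.
Qed.

Lemma totally_mixed_geom x : (1 <= k)%N -> 0 < x < 1 ->
  totally_mixed (geom_mixed x).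
Proof.
move=> k_gt0 /andP[x_gt0 x_lt1] c; rewrite ffunE.
have Z_ge : 1 + x <= geom_norm x.
  rewrite /geom_norm; have [k' ->] : exists k', k = k'.+1 by exists k.-1; lia.
  rewrite !big_ord_recl expr0 expr1.
  have : 0 <= \sum_(i < k') x ^+ (lift ord0 (lift ord0 i)).
    by apply: sumr_ge0 => i _; apply: exprn_ge0; lra.
  lra.
have xc_le1 : x ^+ c <= 1 by apply: exprn_ile1; lra.
have xc_gt0 : 0 < x ^+ c by exact: exprn_gt0.
by rewrite divr_gt0 ?ltr_pdivrMr /= ?mul1r; lra.
Qed.

Lemma geom_mixedE x (t : {ffun 'I_k.+1 -> R}) : 0 <= x ->
  \sum_(c < k.+1) t c = 1 ->
  (forall j : 'I_k.+1, j != ord0 -> t j = x * t (inord j.-1)) ->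
  t = geom_mixed x.
Proof.
move=> x_ge0 t_sum t_succ.
have t_pow n : (n < k.+1)%N -> t (inord n) = x ^+ n * t ord0.
  elim: n => [|n IH] n_lt.
    by rewrite expr0 mul1r; congr (t _); apply: val_inj; rewrite /= inordK.
  rewrite t_succ; last by rewrite -val_eqE /= inordK.
  by rewrite inordK //= IH ?(ltnW n_lt) // exprS mulrA.
have {}t_pow (c : 'I_k.+1) : t c = x ^+ c * t ord0 by rewrite -t_pow ?inord_val.
have Zt : geom_norm x * t ord0 = 1.
  rewrite -t_sum /geom_norm mulr_suml.
  by apply: eq_bigr => c _; rewrite [RHS]t_pow.
have Z_neq0 : geom_norm x != 0 by rewrite gt_eqF // geom_norm_gt0.
by apply/ffunP => c; rewrite ffunE t_pow -[t ord0](mulKf Z_neq0) Zt mulr1.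
Qed.

End Geometric.

Section Payoffs.
Variables (R : realFieldType) (k : nat).

Definition ratio_payoff : payoff3 R 2 k.+1 k.+1 := fun a j c =>
  if j == ord0 then 0 else (c == j)%:R - (a == ord0)%:R * (c == inord j.-1)%:R.

Lemma exp_ratio_payoff (s1 : {ffun 'I_2 -> R}) (t : {ffun 'I_k.+1 -> R}) j :
  \sum_(a < 2) s1 a = 1 ->
  exp_payoff ratio_payoff s1 (pure R j) t =
  if j == ord0 then 0 else t j - s1 ord0 * t (inord j.-1).
Proof.
move=> s1_sum; rewrite exp_payoff_pure2; case: eqP => [->|/eqP j_neq0].
  by apply: big1 => a _; apply: big1 => c _; rewrite /ratio_payoff eqxx !mul0r.
have row a : \sum_(c < k.+1) ratio_payoff a j c * s1 a * t c =
    s1 a * t j - (a == ord0)%:R * s1 a * t (inord j.-1).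
  rewrite (eq_bigr (fun c => (c == j)%:R * (s1 a * t c) -
    (c == inord j.-1)%:R * ((a == ord0)%:R * s1 a * t c))); last first.
    by move=> c _; rewrite /ratio_payoff (negbTE j_neq0); ring.
  by rewrite sumrB !sum_indicator_mul.
rewrite big_ord2 in s1_sum; rewrite (eq_bigr _ (fun a _ => row a)) big_ord2 /=.
have -> : s1 ord_max = 1 - s1 ord0 by rewrite -s1_sum; ring.
ring.
Qed.

Lemma ratio_payoff_indifferent (s1 : {ffun 'I_2 -> R})
    (t : {ffun 'I_k.+1 -> R}) :
  \sum_(a < 2) s1 a = 1 ->
  (forall j0 j : 'I_k.+1, (j0 : nat) = 0%N ->
     exp_payoff ratio_payoff s1 (pure R j) t =
     exp_payoff ratio_payoff s1 (pure R j0) t) <->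
  (forall j : 'I_k.+1, j != ord0 -> t j = s1 ord0 * t (inord j.-1)).
Proof.
move=> s1_sum; split=> [indiff j j_neq0 | ratio j0 j j0_eq0].
  move: (indiff ord0 j erefl).
  rewrite !exp_ratio_payoff // eqxx (negbTE j_neq0).
  by move/eqP; rewrite subr_eq0 => /eqP.
have -> : j0 = ord0 by exact: val_inj.
rewrite !exp_ratio_payoff // eqxx; case: eqP => // /eqP j_neq0.
by rewrite ratio // subrr.
Qed.

(* Spreads the coefficients of f over the grid so that f_i sits at a cell
   (b, c) with b + c = i: f_0, ..., f_k fill the first column and
   f_(k+1), ..., f_(2k) the last row. *)
Definition coef_grid (f : {poly R}) (b c : 'I_k.+1) : R :=
  if c == ord0 then f`_b else if b == ord_max then f`_(k + c) else 0.

Lemma horner_coef_grid (f : {poly R}) x : (size f <= k.+1 + k)%N ->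
  \sum_(b < k.+1) \sum_(c < k.+1) coef_grid f b c * (x ^+ b * x ^+ c) = f.[x].
Proof.
move=> f_size; rewrite (horner_coef_wide x f_size) big_split_ord /=.
rewrite exchange_big big_ord_recl /=; congr (_ + _).
  by apply: eq_bigr => b _; rewrite /coef_grid eqxx expr0 mulr1.
apply: eq_bigr => i _; rewrite big_ord_recr /= big1 ?add0r.
  by rewrite /coef_grid /= eqxx -exprD addSnnS.
move=> b _; rewrite /coef_grid /=.
suff /negbTE -> : widen_ord (leqnSn k) b != ord_max by rewrite mul0r.
by rewrite -val_eqE /= neq_ltn ltn_ord.
Qed.

Definition root_payoff (f : {poly R}) : payoff3 R 2 k.+1 k.+1 := fun a b c =>
  if a == ord0 then 0 else coef_grid f b c.

Lemma exp_root_payoff0 (f : {poly R}) (s2 s3 : {ffun 'I_k.+1 -> R}) :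
  exp_payoff (root_payoff f) (pure R ord0) s2 s3 = 0.
Proof.
rewrite exp_payoff_pure1.
by apply: big1 => b _; apply: big1 => c _; rewrite !mul0r.
Qed.

Lemma exp_root_payoff1 (f : {poly R}) (x : R) : (size f <= k.+1 + k)%N ->
  exp_payoff (root_payoff f) (pure R ord_max) (geom_mixed k x)
    (geom_mixed k x) = f.[x] / geom_norm k x ^+ 2.
Proof.
move=> f_size; rewrite exp_payoff_pure1 -(horner_coef_grid x f_size) mulr_suml.
apply: eq_bigr => b _; rewrite mulr_suml; apply: eq_bigr => c _.
rewrite !ffunE /root_payoff /=.
by move: (x ^+ b) (x ^+ c) (geom_norm k x) => p q Z; rewrite expr2 invfM; ring.
Qed.

Lemma root_payoff_indifferent (f : {poly R}) (x : R) :
  (size f <= k.+1 + k)%N -> 0 <= x ->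
  (forall j0 j : 'I_2, (j0 : nat) = 0%N ->
     exp_payoff (root_payoff f) (pure R j) (geom_mixed k x) (geom_mixed k x)
     = exp_payoff (root_payoff f) (pure R j0) (geom_mixed k x) (geom_mixed k x))
  <-> root f x.
Proof.
move=> f_size x_ge0; have Z_neq0 := lt0r_neq0 (geom_norm_gt0 k x_ge0).
split=> [indiff | /rootP f_x j0 j j0_eq0].
  move: (indiff ord0 ord_max erefl).
  rewrite exp_root_payoff0 exp_root_payoff1 // => /eqP.
  by rewrite mulf_eq0 invr_eq0 expf_eq0 (negbTE Z_neq0) andbF orbF.
have -> : j0 = ord0 by exact: val_inj.
case: (ord2P j) => -> //.
by rewrite exp_root_payoff0 exp_root_payoff1 // f_x mul0r.
Qed.

End Payoffs.

Arguments ratio_payoff {R} k.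
Arguments root_payoff {R} k f.

Section Game.
Variables (R : realFieldType) (k : nat) (f : {poly R}).
Hypotheses (k_gt0 : (1 <= k)%N) (f_size : (size f <= k.+1 + k)%N).

Definition geom_profile (x : R) : profile3 R 2 k.+1 k.+1 :=
  (bernoulli_mixed x, geom_mixed k x, geom_mixed k x).

Lemma geom_profile_weight x : (geom_profile x).1.1 ord0 = x.
Proof. by rewrite ffunE. Qed.

Lemma totally_mixed_NE_geomP (sg : profile3 R 2 k.+1 k.+1) :
  totally_mixed_NE (root_payoff k f) (ratio_payoff k) (swap23 (ratio_payoff k))
    sg <->
  exists2 x, root f x /\ 0 < x < 1 & sg = geom_profile x.
Proof.
split=> [|[x [f_x x01] ->]].
  case: sg => [[s1 s2 s3]] [m1 m2 m3 [t1 _] [i1 i2 i3]].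
  set x := s1 ord0; have x01 : 0 < x < 1 := t1 ord0.
  have x_ge0 : 0 <= x by case/andP: x01 => /ltW.
  have s3E : s3 = geom_mixed k x.
    exact: geom_mixedE x_ge0 m3.2 ((ratio_payoff_indifferent _ m1.2).1 i2).
  have s2E : s2 = geom_mixed k x.
    apply: geom_mixedE x_ge0 m2.2 _; apply/(ratio_payoff_indifferent s2 m1.2).
    by move=> j0 j /i3; rewrite -[LHS]exp_payoff_swap23 -[RHS]exp_payoff_swap23.
  have s1E : s1 = bernoulli_mixed x := bernoulli_mixedE m1.2.
  exists x; last by rewrite {1}s1E s2E s3E.
  split=> //; apply/(root_payoff_indifferent f_size x_ge0).
  by move: i1; rewrite s2E s3E.
have x_ge0 : 0 <= x by case/andP: x01 => /ltW.
have geom_ratio (j : 'I_k.+1) : j != ord0 ->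
    geom_mixed k x j = bernoulli_mixed x ord0 * geom_mixed k x (inord j.-1).
  by rewrite [bernoulli_mixed _ _]ffunE eqxx; exact: geom_mixed_succ.
have ratio_indiff :=
  (ratio_payoff_indifferent _ (bernoulli_mixed_sum x)).2 geom_ratio.
split; do ?[exact: is_mixed_bernoulli | exact: is_mixed_geom].
  by split; [exact: totally_mixed_bernoulli | split; exact: totally_mixed_geom].
split; first exact/(root_payoff_indifferent f_size x_ge0).
  exact: ratio_indiff.
move=> j0 j /ratio_indiff.
by rewrite -[LHS]exp_payoff_swap23 -[RHS]exp_payoff_swap23.
Qed.

End Game.

Theorem theorem3 (R : realType) (d : nat) (f : {poly R}) :
  (1 <= d)%N -> size f = d.+1 ->
  exists (u1 u2 u3 : payoff3 R 2 (uphalf d).+1 (uphalf d).+1),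
    (forall x : R,
        (exists sg : profile3 R 2 (uphalf d).+1 (uphalf d).+1,
            totally_mixed_NE u1 u2 u3 sg /\ sg.1.1 ord0 = x)
        <-> (root f x /\ 0 < x < 1))
    /\ exists n : nat,
        has_card (totally_mixed_NE u1 u2 u3) n
        /\ has_card (fun x : R => root f x /\ 0 < x < 1) n.
Proof.
move=> d_gt0 f_sizeE; set k := uphalf d.
have k_gt0 : (1 <= k)%N by rewrite uphalf_gt0.
have f_size : (size f <= k.+1 + k)%N by rewrite f_sizeE /k; lia.
have NE_geomP := totally_mixed_NE_geomP k_gt0 f_size.
have rootsP (x : R) : root f x /\ 0 < x < 1 <-> x \in roots f 0 1.
  rewrite in_roots in_itv /= -size_poly_gt0 f_sizeE andbT.
  by split=> [[-> ->]|/andP[]].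
exists (root_payoff k f), (ratio_payoff k), (swap23 (ratio_payoff k)); split.
  move=> x; split=> [[_ [/NE_geomP[y y_root ->] <-]] | x_root].
    by rewrite geom_profile_weight.
  exists (geom_profile k x); split; last exact: geom_profile_weight.
  by apply/NE_geomP; exists x.
exists (size (roots f 0 1)); split.
  2: by exists (roots f 0 1); rewrite uniq_roots.
exists (map (geom_profile k) (roots f 0 1)); split; last by rewrite size_map.
- rewrite map_inj_uniq ?uniq_roots // => x y.
  move/(congr1 (fun sg : profile3 R 2 k.+1 k.+1 => sg.1.1 ord0)).
  by rewrite !geom_profile_weight.
- move=> sg; rewrite NE_geomP; split=> [[x /rootsP x_root ->]|/mapP[x /rootsP]].
    exact: map_f.
  by exists x.
Qed.
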